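(* Let $x,y>0$ and $z\ge 0$ (the approximation is intended for the regime $z\ll x,y$). Let $a=(x+y)/2$ and $g=\sqrt{xy}$. Then $$R_G(x,y,z)=R_G(x,y,0)+\pi\theta z/8,$$ where $$\frac{1}{\sqrt a}\left(1-\frac4\pi\sqrt{\frac za}\right)<\theta<\left(\frac{2}{ag+g^2}\right)^{1/4}\le\frac1{\sqrt g},$$ with equality in the last inequality iff $x=y$.
   Context: For $x,y,z\ge0$ with at most one zero: $R_G(x,y,z)=\frac14\int_0^\infty[(t+x)(t+y)(t+z)]^{-1/2}\left(\frac{x}{t+x}+\frac{y}{t+y}+\frac{z}{t+z}\right)t\,dt$. *)

From Stdlib Require Import Reals.
From Coquelicot Require Import Coquelicot.
Open Scope R_scope.

Definition RG_integrand (x y z t : R) : R :=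
  / 4 * (/ sqrt ((t + x) * (t + y) * (t + z)))
      * (x / (t + x) + y / (t + y) + z / (t + z)) * t.

Definition R_G (x y z : R) : R :=
  RInt_gen (RG_integrand x y z) (at_point 0) (Rbar_locally p_infty).

(* Substituting t = u^2 turns R_G(x,y,w) into int_0^oo A_w with A_w(u) = 2 u f_w(u^2).
   For z > 0, (u K(u))' = K + A_0 - A_z for the kernel
   K(u) = u^2 z / (2 r s (s + u)),  r = sqrt((u^2+x)(u^2+y)),  s = sqrt(u^2+z),
   and u K(u) -> 0 at infinity, so R_G(x,y,z) - R_G(x,y,0) = int_0^oo K = pi theta z / 8.
   From below, K >= z/4 (1/(u^2+a) - (z/a)/(u^2+z)), which integrates to
   pi z/8 (1/sqrt a - sqrt z/a).  From above, K < z/(4r), and with the Landen mean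
   c = sqrt(g (a+g)/2) one has 1/r <= (u^2+g) / ((u^2-g)^2 + 4 c u^2), because the squares
   of the two denominators differ by 2 u^2 (a+3g-4c) (u^2-g)^2 >= 0.  Writing p + q = 2 sqrt c
   and p q = g, the right-hand side is (p/(u^2+p^2) + q/(u^2+q^2)) / (p+q), whose integral
   is at most pi/(2 sqrt c); finally 1/sqrt c = (2/(a g + g^2))^(1/4). *)

From Stdlib Require Import Reals Lra Classical_Pred_Type.
From Coquelicot Require Import Coquelicot.
Open Scope R_scope.

Lemma PI_lt_4 : PI < 4.
Proof.
  destruct (PI_ineq 1) as [_ H]; simpl in H; unfold tg_alt, PI_tg in H; simpl in H; lra.
Qed.

Lemma sqrt_mult_le_mean (u v : R) : 0 <= u -> 0 <= v -> sqrt (u * v) <= (u + v) / 2.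
Proof.
  intros hu hv.
  rewrite <- (sqrt_square ((u + v) / 2)) by lra.
  apply sqrt_le_1_alt; pose proof (Rle_0_sqr (u - v)); unfold Rsqr in *; nra.
Qed.

Lemma exists_pos_sum_prod (S P : R) :
  0 < P -> 0 < S -> 4 * P <= S * S -> exists p q, 0 < p /\ 0 < q /\ p + q = S /\ p * q = P.
Proof.
  intros hP hS hdisc.
  set (d := sqrt (S * S - 4 * P)).
  assert (Hd : d * d = S * S - 4 * P) by (apply sqrt_sqrt; lra).
  assert (0 <= d) by apply sqrt_pos.
  assert (d < S) by nra.
  exists ((S + d) / 2), ((S - d) / 2); repeat split; lra.
Qed.

Lemma sqrt_sqr_add_bounds (z u : R) : 0 < z ->
  0 < sqrt (u * u + z) /\ sqrt (u * u + z) * sqrt (u * u + z) = u * u + z /\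
  u < sqrt (u * u + z) /\ 0 < sqrt (u * u + z) + u.
Proof.
  intros hz.
  assert (0 < sqrt (u * u + z)) by (apply sqrt_lt_R0; nra).
  assert (sqrt (u * u + z) * sqrt (u * u + z) = u * u + z) by (apply sqrt_sqrt; nra).
  repeat split; auto; nra.
Qed.

Lemma Rdiv_le_cross (a b c d : R) : 0 < b -> 0 < d -> a * d <= c * b -> a / b <= c / d.
Proof.
  intros hb hd H; unfold Rdiv.
  apply Rmult_le_reg_r with (b * d); [nra |].
  replace (a * / b * (b * d)) with (a * d) by (field; lra).
  replace (c * / d * (b * d)) with (c * b) by (field; lra); exact H.
Qed.

Lemma Rpower_inv_sqr_quarter (c : R) : 0 < c -> Rpower (/ (c * c)) (/ 4) = / sqrt c.
Proof.
  intros hc; rewrite <- Rpower_sqrt by auto; unfold Rpower.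
  rewrite ln_Rinv, ln_mult, <- exp_Ropp by nra; f_equal; field.
Qed.

(** * Improper integrals on [0, +oo) *)

Lemma is_lim_div_pinfty (k : R) : is_lim (fun C => k / C) p_infty 0.
Proof.
  apply is_lim_ext with (fun C => k * / C); [reflexivity |].
  replace (Finite 0) with (Rbar_mult k (Rbar_inv p_infty)) by (simpl; f_equal; ring).
  apply is_lim_scal_l, is_lim_inv; [apply is_lim_id | discriminate].
Qed.

Lemma is_lim_atan_pinfty (p : R) : 0 < p -> is_lim (fun C => atan (C / p)) p_infty (PI / 2).
Proof.
  intros hp.
  apply is_lim_ext_loc with (fun C => PI / 2 - atan (p / C)).
  - exists 0; intros C HC.
    rewrite <- atan_inv by (apply Rdiv_lt_0_compat; lra).
    f_equal; field; lra.
  - replace (Finite (PI / 2)) with (Finite (PI / 2 - atan 0)) by (rewrite atan_0; f_equal; ring).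
    apply is_lim_minus'; [apply is_lim_const |].
    apply is_lim_comp_continuous; [apply is_lim_div_pinfty |].
    apply (ex_derive_continuous (K := R_AbsRing) (V := R_NormedModule)); auto_derive; auto.
Qed.

Lemma is_lim_pinfty_nondecreasing (F : R -> R) (M : R) :
  (forall u v, 0 <= u <= v -> F u <= F v) -> (forall u, 0 <= u -> F u <= M) ->
  exists l : R, is_lim F p_infty l.
Proof.
  intros Hmono Hbound.
  set (E := fun v => exists u, 0 <= u /\ v = F u).
  destruct (completeness E) as [l [Hub Hlub]].
  - exists M; intros v [u [Hu ->]]; auto.
  - exists (F 0), 0; split; lra.
  - exists l; apply filterlim_locally; intros eps.
    assert (Hu0 : exists u, 0 <= u /\ l - eps < F u).
    { apply not_all_not_ex; intros Hn.
      enough (l <= l - eps) by (destruct eps; simpl in *; lra).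
      apply Hlub; intros v [u [Hu ->]].
      destruct (Rle_or_lt (F u) (l - eps)) as [H | H]; [exact H |].
      exfalso; apply (Hn u); auto. }
    destruct Hu0 as [u0 [Hu0 Hlt]].
    exists u0; intros u Hu.
    assert (F u <= l) by (apply Hub; exists u; split; lra).
    assert (F u0 <= F u) by (apply Hmono; lra).
    apply Rabs_def1; simpl; unfold minus, plus, opp; simpl; lra.
Qed.

Lemma RInt_gen_pinfty_of_is_lim (f : R -> R) (l : R) :
  (forall b, 0 <= b -> ex_RInt f 0 b) ->
  is_lim (fun b => RInt f 0 b) p_infty l ->
  RInt_gen f (at_point 0) (Rbar_locally p_infty) = l.
Proof.
  intros Hex Hlim; apply is_RInt_gen_unique.
  intros P HP; destruct (Hlim P HP) as [M HM].
  apply Filter_prod with (fun a => a = 0) (fun b => Rmax 0 M < b).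
  - reflexivity.
  - exists (Rmax 0 M); auto.
  - intros a b -> Hb; simpl.
    assert (0 <= Rmax 0 M /\ M <= Rmax 0 M) as [H0 HM'] by (split; [apply Rmax_l | apply Rmax_r]).
    exists (RInt f 0 b); split.
    + apply RInt_correct, Hex; lra.
    + apply HM; lra.
Qed.

Lemma RInt_gen_pinfty_subst_sqr (f : R -> R) (l : R) :
  (forall t, 0 <= t -> continuous f t) ->
  is_lim (fun C => RInt (fun u => 2 * u * f (u * u)) 0 C) p_infty l ->
  RInt_gen f (at_point 0) (Rbar_locally p_infty) = l.
Proof.
  intros Hf Hlim; apply RInt_gen_pinfty_of_is_lim.
  - intros b Hb; apply (ex_RInt_continuous (V := R_CompleteNormedModule)).
    intros t Ht; rewrite Rmin_left, Rmax_right in Ht by lra; apply Hf; lra.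
  - apply is_lim_ext_loc with (fun b => RInt (fun u => 2 * u * f (u * u)) 0 (sqrt b)).
    + exists 0; intros b Hb.
      replace (RInt f 0 b) with (RInt f (0 * 0) (sqrt b * sqrt b))
        by (rewrite Rmult_0_l, sqrt_sqrt; [reflexivity | lra]).
      apply (RInt_comp (V := R_CompleteNormedModule) f (fun u => u * u) (fun u => 2 * u)).
      * intros u Hu; apply Hf; nra.
      * intros u _; split.
        -- auto_derive; [auto | ring].
        -- apply (ex_derive_continuous (K := R_AbsRing) (V := R_NormedModule)); auto_derive; auto.
    + apply (is_lim_comp _ sqrt p_infty l p_infty); [exact Hlim | |].
      * apply is_lim_sqrt_p, is_lim_id.
      * exists 0; intros b _; discriminate.
Qed.

Lemma is_lim_RInt_of_dominated (f h : R -> R) (M : R) :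
  (forall u, 0 <= u -> continuous f u) -> (forall u, 0 <= u -> continuous h u) ->
  (forall u, 0 <= u -> 0 <= f u <= h u) -> (forall C, 0 <= C -> RInt h 0 C <= M) ->
  exists l : R, is_lim (fun C => RInt f 0 C) p_infty l.
Proof.
  intros Hf Hh Hfh HM.
  assert (Hex : forall (F : R -> R) a b,
    (forall u, 0 <= u -> continuous F u) -> 0 <= a <= b -> ex_RInt F a b).
  { intros F a b HF Hab; apply (ex_RInt_continuous (V := R_CompleteNormedModule)).
    intros t Ht; rewrite Rmin_left, Rmax_right in Ht by lra; apply HF; lra. }
  apply is_lim_pinfty_nondecreasing with M.
  - intros u v Huv.
    rewrite <- (RInt_Chasles f 0 u v) by (apply Hex; auto; lra).
    assert (0 <= RInt f u v)
      by (apply RInt_ge_0; [lra | apply Hex; auto; lra | intros t Ht; apply Hfh; lra]).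
    simpl; unfold plus; simpl; lra.
  - intros C HC; apply Rle_trans with (RInt h 0 C); [| auto].
    apply RInt_le; [lra | apply Hex; auto; lra | apply Hex; auto; lra |].
    intros t Ht; apply Hfh; lra.
Qed.

Lemma is_RInt_cauchy (p C : R) : 0 < p -> is_RInt (fun u => p / (u * u + p * p)) 0 C (atan (C / p)).
Proof.
  intros hp.
  replace (atan (C / p)) with (atan (C / p) - atan (0 / p)) by (rewrite Rdiv_0_l, atan_0; ring).
  apply (is_RInt_derive (V := R_CompleteNormedModule) (fun u => atan (u / p))).
  - intros u _; auto_derive; [lra |]; field; split; [nra | lra].
  - intros u _; apply (ex_derive_continuous (K := R_AbsRing) (V := R_NormedModule)).
    auto_derive; nra.
Qed.

(** * The Landen bound *)

Definition rad (x y u : R) : R := sqrt ((u * u + x) * (u * u + y)).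

Lemma rad_pos x y u : 0 < x -> 0 < y -> 0 < rad x y u.
Proof. intros; apply sqrt_lt_R0; nra. Qed.

Lemma rad_sqr x y u : 0 < x -> 0 < y -> rad x y u * rad x y u = (u * u + x) * (u * u + y).
Proof. intros; apply sqrt_sqrt; nra. Qed.

Lemma continuous_inv_rad x y u : 0 < x -> 0 < y -> continuous (fun v => / rad x y v) u.
Proof.
  intros hx hy; apply (ex_derive_continuous (K := R_AbsRing) (V := R_NormedModule)); unfold rad.
  auto_derive; repeat split; try apply Rgt_not_eq; try apply sqrt_lt_R0; nra.
Qed.

Section Landen.

Variables x y : R.
Hypotheses (hx : 0 < x) (hy : 0 < y).

Local Notation a := ((x + y) / 2).
Local Notation g := (sqrt (x * y)).
Local Notation c := (sqrt (g * ((a + g) / 2))).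

Lemma gm_pos : 0 < g.
Proof. apply sqrt_lt_R0; nra. Qed.

Lemma gm_sqr : g * g = x * y.
Proof. apply sqrt_sqrt; nra. Qed.

Lemma gm_le_am : g <= a.
Proof. apply sqrt_mult_le_mean; lra. Qed.

Lemma landen_sqr : c * c = g * ((a + g) / 2).
Proof. apply sqrt_sqrt; pose proof gm_pos; pose proof gm_le_am; nra. Qed.

Lemma gm_le_landen : g <= c.
Proof.
  pose proof gm_pos; pose proof gm_le_am.
  rewrite <- (sqrt_square g) at 1 by lra.
  apply sqrt_le_1_alt; nra.
Qed.

Lemma landen_pos : 0 < c.
Proof. pose proof gm_pos; pose proof gm_le_landen; lra. Qed.

Lemma landen_le_mean : 4 * c <= a + 3 * g.
Proof.
  pose proof gm_pos; pose proof gm_le_am.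
  pose proof (sqrt_mult_le_mean g ((a + g) / 2)); lra.
Qed.

Lemma landen_eq_gm_iff : c = g <-> x = y.
Proof.
  pose proof gm_pos as hg; pose proof gm_sqr as Hg; pose proof landen_sqr as Hc.
  split.
  - intros Hcg; rewrite Hcg in Hc.
    assert (Hag : (x + y) / 2 = g) by nra.
    assert ((x - y) * (x - y) = 0) by (rewrite <- Hag in Hg; nra).
    nra.
  - intros <-.
    rewrite (sqrt_square x) by lra.
    replace (x * (((x + x) / 2 + x) / 2)) with (x * x) by field.
    apply sqrt_square; lra.
Qed.

Lemma Rpower_landen : Rpower (2 / (a * g + g ^ 2)) (/ 4) = / sqrt c.
Proof.
  pose proof gm_pos; rewrite <- Rpower_inv_sqr_quarter by exact landen_pos.
  rewrite landen_sqr; f_equal; field; nra.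
Qed.

Lemma inv_sqrt_landen_le : / sqrt c <= / sqrt g.
Proof.
  apply Rinv_le_contravar; [apply sqrt_lt_R0, gm_pos | apply sqrt_le_1_alt, gm_le_landen].
Qed.

Lemma inv_sqrt_landen_eq_iff : / sqrt c = / sqrt g <-> x = y.
Proof.
  pose proof gm_pos; pose proof landen_pos.
  rewrite <- landen_eq_gm_iff; split; [| intros ->; reflexivity].
  intros Heq; apply sqrt_inj; try lra.
  rewrite <- (Rinv_inv (sqrt c)), Heq, Rinv_inv; reflexivity.
Qed.

Lemma inv_rad_le_cauchy_pair (p q u : R) :
  0 < p -> 0 < q -> p * q = g -> (p + q) ^ 2 = 4 * c ->
  / rad x y u <= / (p + q) * (p / (u * u + p * p) + q / (u * u + q * q)).
Proof.
  intros hp hq Hpq Hsum.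
  pose proof gm_pos as hg; pose proof gm_sqr as Hg; pose proof landen_sqr as Hc.
  pose proof landen_le_mean as Hmean.
  set (w := u * u); assert (hw : 0 <= w) by (unfold w; nra).
  set (r := rad x y u); assert (hr : 0 < r) by (apply rad_pos; auto).
  assert (Hr : r * r = w * w + 2 * a * w + g * g)
    by (unfold r; rewrite rad_sqr, Hg by auto; fold w; field).
  set (D := (w + p * p) * (w + q * q)); assert (hD : 0 < D) by (unfold D; nra).
  assert (HD : D = w * w + (4 * c - 2 * g) * w + g * g)
    by (unfold D; rewrite <- Hsum, <- Hpq; ring).
  assert (Hkernel : / (p + q) * (p / (w + p * p) + q / (w + q * q)) = (w + g) / D)
    by (unfold D; rewrite <- Hpq; field; repeat split; nra).
  fold w; rewrite Hkernel.
  assert (Hsq : D * D <= (r * (w + g)) * (r * (w + g))).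
  { assert (E : (r * (w + g)) * (r * (w + g)) - D * D
                = 2 * w * (a + 3 * g - 4 * c) * ((w - g) * (w - g))
                  - 16 * (w * w) * (c * c - g * ((a + g) / 2))).
    { replace ((r * (w + g)) * (r * (w + g))) with ((r * r) * ((w + g) * (w + g))) by ring.
      rewrite Hr, HD; field. }
    rewrite Hc, Rminus_diag, Rmult_0_r, Rminus_0_r in E.
    assert (0 <= 2 * w * (a + 3 * g - 4 * c) * ((w - g) * (w - g))).
    { apply Rmult_le_pos; [apply Rmult_le_pos; lra | apply Rle_0_sqr]. }
    lra. }
  assert (HDr : D <= r * (w + g)) by (apply Rsqr_incr_0_var; unfold Rsqr; nra).
  replace (/ r) with (1 / r) by (field; lra).
  apply Rdiv_le_cross; lra.
Qed.

Lemma RInt_inv_rad_le (C : R) : 0 <= C -> RInt (fun u => / rad x y u) 0 C <= PI / (2 * sqrt c).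
Proof.
  intros hC.
  pose proof gm_pos as hg; pose proof gm_le_landen as hgc; pose proof landen_pos as hc.
  assert (hsc : 0 < sqrt c) by (apply sqrt_lt_R0; lra).
  assert (Hsc : sqrt c * sqrt c = c) by (apply sqrt_sqrt; lra).
  destruct (exists_pos_sum_prod (2 * sqrt c) g) as (p & q & hp & hq & Hsum & Hpq);
    [lra | lra | nra |].
  assert (Hint : is_RInt (fun u => / (p + q) * (p / (u * u + p * p) + q / (u * u + q * q))) 0 C
                   (/ (p + q) * (atan (C / p) + atan (C / q)))).
  { apply (is_RInt_scal (V := R_NormedModule)), (is_RInt_plus (V := R_NormedModule));
      apply is_RInt_cauchy; auto. }
  apply Rle_trans with (/ (p + q) * (atan (C / p) + atan (C / q))).
  - rewrite <- (is_RInt_unique _ _ _ _ Hint).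
    apply RInt_le; [exact hC | | eexists; exact Hint |].
    + apply (ex_RInt_continuous (V := R_CompleteNormedModule)); intros u _.
      apply continuous_inv_rad; auto.
    + intros u _; apply inv_rad_le_cauchy_pair; auto.
      rewrite Hsum; nra.
  - rewrite Hsum.
    destruct (atan_bound (C / p)), (atan_bound (C / q)).
    apply Rmult_le_reg_l with (2 * sqrt c); [lra |].
    field_simplify; lra.
Qed.

Lemma is_lim_RInt_of_le_inv_rad (f : R -> R) (k : R) : 0 <= k ->
  (forall u, 0 <= u -> continuous f u) -> (forall u, 0 <= u -> 0 <= f u <= k * / rad x y u) ->
  exists l : R, is_lim (fun C => RInt f 0 C) p_infty l.
Proof.
  intros hk Hf Hfr.
  apply is_lim_RInt_of_dominated with (fun u => k * / rad x y u) (k * (PI / (2 * sqrt c))); auto.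
  - intros u _; apply (continuous_mult (K := R_AbsRing) (fun _ => k) (fun v => / rad x y v)).
    + apply continuous_const.
    + apply continuous_inv_rad; auto.
  - intros C hC.
    rewrite (RInt_scal (V := R_CompleteNormedModule) (fun u => / rad x y u)).
    + apply Rmult_le_compat_l; [exact hk | apply RInt_inv_rad_le; exact hC].
    + apply (ex_RInt_continuous (V := R_CompleteNormedModule)); intros u _.
      apply continuous_inv_rad; auto.
Qed.

End Landen.

(** * The substituted integrands *)

Lemma continuous_RG_integrand x y w t : 0 < x -> 0 < y -> 0 <= w -> 0 <= t ->
  continuous (RG_integrand x y w) t.
Proof.
  intros hx hy hw ht.
  destruct (Rlt_or_le 0 (t + w)) as [Htw | Htw].
  - apply (ex_derive_continuous (K := R_AbsRing) (V := R_NormedModule)); unfold RG_integrand.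
    assert (0 < (t + x) * (t + y) * (t + w)) by (apply Rmult_lt_0_compat; nra).
    auto_derive; repeat split; try lra; apply Rgt_not_eq, sqrt_lt_R0; lra.
  - assert (w = 0 /\ t = 0) as [-> ->] by lra.
    (* Near 0 the integrand is sqrt t * h t; for t <= 0 both sides vanish,
       as there sqrt t = 0 and / 0 = 0. *)
    set (h := fun s => / 4 * / sqrt ((s + x) * (s + y)) * (x / (s + x) + y / (s + y))).
    assert (hm : 0 < Rmin x y) by (apply Rmin_pos; auto).
    apply (continuous_ext_loc _ (fun s => sqrt s * h s)).
    + exists (mkposreal _ hm); intros s Hs.
      unfold ball in Hs; simpl in Hs; unfold AbsRing_ball, abs, minus, plus, opp in Hs; simpl in Hs.
      destruct (Rabs_def2 _ _ Hs); pose proof (Rmin_l x y); pose proof (Rmin_r x y).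
      assert (hP : 0 < (s + x) * (s + y)) by nra.
      change (sqrt s * h s = RG_integrand x y 0 s).
      unfold RG_integrand, h; rewrite Rplus_0_r, Rdiv_0_l, Rplus_0_r.
      destruct (Rle_or_lt s 0) as [Hs0 | Hs0].
      * rewrite (sqrt_neg_0 s), (sqrt_neg_0 ((s + x) * (s + y) * s)), Rinv_0 by nra; ring.
      * rewrite (sqrt_mult ((s + x) * (s + y)) s) by lra.
        assert (0 < sqrt s) by (apply sqrt_lt_R0; lra).
        assert (0 < sqrt ((s + x) * (s + y))) by (apply sqrt_lt_R0; lra).
        assert (Hq : / sqrt s * s = sqrt s) by (rewrite <- (sqrt_sqrt s) at 2 by lra; field; lra).
        rewrite Rinv_mult, <- Hq at 1; ring.
    + apply (continuous_mult (K := R_AbsRing) sqrt h); [apply continuous_sqrt |].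
      apply (ex_derive_continuous (K := R_AbsRing) (V := R_NormedModule)); unfold h.
      auto_derive; repeat split; try apply Rgt_not_eq; try apply sqrt_lt_R0; nra.
Qed.

Lemma R_G_of_is_lim x y w (l : R) : 0 < x -> 0 < y -> 0 <= w ->
  is_lim (fun C => RInt (fun u => 2 * u * RG_integrand x y w (u * u)) 0 C) p_infty l ->
  R_G x y w = l.
Proof.
  intros hx hy hw; apply RInt_gen_pinfty_subst_sqr.
  intros t ht; apply continuous_RG_integrand; auto.
Qed.

Lemma continuous_RG_integrand_sqr x y w u : 0 < x -> 0 < y -> 0 <= w ->
  continuous (fun v => 2 * v * RG_integrand x y w (v * v)) u.
Proof.
  intros hx hy hw.
  apply (continuous_mult (K := R_AbsRing) (fun v => 2 * v) (fun v => RG_integrand x y w (v * v))).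
  - apply (ex_derive_continuous (K := R_AbsRing) (V := R_NormedModule)); auto_derive; auto.
  - apply (continuous_comp (fun v => v * v) (RG_integrand x y w)).
    + apply (ex_derive_continuous (K := R_AbsRing) (V := R_NormedModule)); auto_derive; auto.
    + apply continuous_RG_integrand; auto; nra.
Qed.

Definition RG0_subst (x y u : R) : R :=
  u * u * (x / (u * u + x) + y / (u * u + y)) / (2 * rad x y u).

Lemma RG0_subst_eq x y u : 0 < x -> 0 < y -> 0 <= u ->
  2 * u * RG_integrand x y 0 (u * u) = RG0_subst x y u.
Proof.
  intros hx hy hu; unfold RG_integrand, RG0_subst.
  rewrite Rplus_0_r, Rdiv_0_l, Rplus_0_r, sqrt_mult, sqrt_square by nra; fold (rad x y u).
  pose proof (rad_pos x y u hx hy).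
  destruct (Req_dec u 0) as [-> | Hu0].
  - unfold Rdiv; ring.
  - field; repeat split; nra.
Qed.

Lemma RG0_subst_bound x y u : 0 < x -> 0 < y -> 0 <= RG0_subst x y u <= (x + y) / 2 * / rad x y u.
Proof.
  intros hx hy; unfold RG0_subst; pose proof (rad_pos x y u hx hy).
  assert (Hfrac : forall v, 0 < v -> 0 <= u * u * (v / (u * u + v)) <= v).
  { intros v hv.
    assert (0 <= v / (u * u + v)) by (apply Rlt_le, Rdiv_lt_0_compat; nra).
    assert (u * u * (v / (u * u + v)) = v - v * (v / (u * u + v))) by (field; nra).
    split; nra. }
  destruct (Hfrac x hx), (Hfrac y hy).
  replace (u * u * (x / (u * u + x) + y / (u * u + y)) / (2 * rad x y u))
    with ((u * u * (x / (u * u + x)) + u * u * (y / (u * u + y))) / 2 * / rad x y u)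
    by (field; repeat split; nra).
  assert (0 < / rad x y u) by (apply Rinv_0_lt_compat; lra).
  split; [apply Rmult_le_pos |apply Rmult_le_compat_r]; lra.
Qed.

Definition RG_kernel (x y z u : R) : R :=
  u * u * z / (2 * rad x y u * sqrt (u * u + z) * (sqrt (u * u + z) + u)).

Lemma is_derive_mul_RG_kernel x y z u : 0 < x -> 0 < y -> 0 < z ->
  is_derive (fun v => v * RG_kernel x y z v) u
    (RG_kernel x y z u + RG0_subst x y u - 2 * u * RG_integrand x y z (u * u)).
Proof.
  intros hx hy hz.
  pose proof (rad_pos x y u hx hy) as Hr; pose proof (rad_sqr x y u hx hy) as Hr2.
  destruct (sqrt_sqr_add_bounds z u hz) as (Hs & Hs2 & _ & Hsu).
  unfold RG_integrand, RG0_subst, RG_kernel.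
  rewrite (sqrt_mult ((u * u + x) * (u * u + y)) (u * u + z)) by nra.
  unfold rad in *.
  auto_derive; [repeat split; try nra; apply Rgt_not_eq; repeat apply Rmult_lt_0_compat; lra |].
  (* Eliminating y and z in favour of r and s lets field use r^2 and s^2. *)
  set (r := sqrt ((u * u + x) * (u * u + y))) in *; set (s := sqrt (u * u + z)) in *.
  clearbody r s.
  assert (y = r * r / (u * u + x) - u * u) as -> by (rewrite Hr2; field; nra).
  assert (z = s * s - u * u) as -> by lra.
  field; repeat split; nra.
Qed.

Lemma continuous_RG_kernel x y z u : 0 < x -> 0 < y -> 0 < z -> continuous (RG_kernel x y z) u.
Proof.
  intros hx hy hz.
  pose proof (rad_pos x y u hx hy); destruct (sqrt_sqr_add_bounds z u hz) as (Hs & _ & _ & Hsu).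
  apply (ex_derive_continuous (K := R_AbsRing) (V := R_NormedModule)); unfold RG_kernel, rad in *.
  auto_derive; repeat split; try nra; apply Rgt_not_eq; repeat apply Rmult_lt_0_compat; lra.
Qed.

Lemma continuous_RG0_subst x y u : 0 < x -> 0 < y -> continuous (RG0_subst x y) u.
Proof.
  intros hx hy; pose proof (rad_pos x y u hx hy).
  apply (ex_derive_continuous (K := R_AbsRing) (V := R_NormedModule)); unfold RG0_subst, rad in *.
  auto_derive; repeat split; nra.
Qed.

Section Kernel.

Variables x y z : R.
Hypotheses (hx : 0 < x) (hy : 0 < y) (hz : 0 < z).

Local Notation a := ((x + y) / 2).
Local Notation r u := (rad x y u).
Local Notation s u := (sqrt (u * u + z)).

Lemma rad_le_sqr_add_am u : r u <= u * u + a.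
Proof.
  pose proof (rad_pos x y u hx hy); pose proof (rad_sqr x y u hx hy).
  apply Rsqr_incr_0_var; unfold Rsqr; [| nra].
  pose proof (Rle_0_sqr (x - y)); unfold Rsqr in *; nra.
Qed.

Lemma RG_kernel_nonneg u : 0 <= u -> 0 <= RG_kernel x y z u.
Proof.
  intros hu; pose proof (rad_pos x y u hx hy) as hr.
  destruct (sqrt_sqr_add_bounds z u hz) as (hs & _ & _ & _); unfold RG_kernel.
  apply Rmult_le_pos; [nra | apply Rlt_le, Rinv_0_lt_compat; repeat apply Rmult_lt_0_compat; lra].
Qed.

Lemma RG_kernel_lt u : 0 <= u -> RG_kernel x y z u < z / 4 * / r u.
Proof.
  intros hu; pose proof (rad_pos x y u hx hy) as hr.
  destruct (sqrt_sqr_add_bounds z u hz) as (hs & Hs & hsu & _); unfold RG_kernel.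
  set (D := 2 * r u * s u * (s u + u)).
  assert (hD : 0 < D) by (unfold D; repeat apply Rmult_lt_0_compat; lra).
  apply Rmult_lt_reg_r with (4 * r u * D); [nra |].
  replace (u * u * z / D * (4 * r u * D)) with (4 * r u * (u * u * z)) by (field; lra).
  replace (z / 4 * / r u * (4 * r u * D)) with (z * D) by (field; lra).
  assert (Hgap : 2 * (u * u) < s u * (s u + u)) by nra.
  assert (0 < 2 * r u * z * (s u * (s u + u) - 2 * (u * u)))
    by (repeat apply Rmult_lt_0_compat; lra).
  unfold D; lra.
Qed.

(* The minorant is written with Cauchy kernels p / (u^2 + p^2), p = sqrt a and p = sqrt z. *)
Lemma RG_kernel_ge u : 0 <= u ->
  z / 4 * (/ sqrt a * (sqrt a / (u * u + sqrt a * sqrt a))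
           - sqrt z / a * (sqrt z / (u * u + sqrt z * sqrt z))) <= RG_kernel x y z u.
Proof.
  intros hu; pose proof (rad_pos x y u hx hy) as hr.
  destruct (sqrt_sqr_add_bounds z u hz) as (hs & Hs & hsu & _); unfold RG_kernel.
  assert (ha : 0 < a) by lra.
  assert (hsa : 0 < sqrt a) by (apply sqrt_lt_R0; lra).
  rewrite !sqrt_sqrt by lra.
  pose proof (rad_le_sqr_add_am u).
  assert (0 <= z * (u * u)) by nra.
  apply Rle_trans with (z * (u * u) / (4 * (u * u + a) * (u * u + z))).
  - replace (z / 4 * (/ sqrt a * (sqrt a / (u * u + a)) - sqrt z / a * (sqrt z / (u * u + z))))
      with (z * (u * u) * (a - z) / (4 * a * (u * u + a) * (u * u + z))).
    2: { transitivity (z / 4 * (/ (u * u + a) - sqrt z * sqrt z / (a * (u * u + z))));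
         [rewrite sqrt_sqrt by lra | ]; field; repeat split; nra. }
    apply Rdiv_le_cross; try (repeat apply Rmult_lt_0_compat; nra).
    assert (0 <= z * (u * u) * z * (4 * (u * u + a) * (u * u + z)))
      by (repeat apply Rmult_le_pos; nra).
    nra.
  - apply Rdiv_le_cross; try (repeat apply Rmult_lt_0_compat; nra).
    set (S := s u) in *; set (R0 := r u) in *; clearbody S R0.
    assert (R0 * (S + u) <= (u * u + a) * (2 * S)) by (apply Rmult_le_compat; lra).
    assert (2 * R0 * S * (S + u) <= 4 * (u * u + a) * (u * u + z)) by (rewrite <- Hs; nra).
    replace (u * u * z) with (z * (u * u)) by ring.
    apply Rmult_le_compat_l; lra.
Qed.

Lemma mul_RG_kernel_bound C : 0 < C -> 0 <= C * RG_kernel x y z C <= z / (4 * C).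
Proof.
  intros hC; pose proof (rad_pos x y C hx hy) as hr.
  destruct (sqrt_sqr_add_bounds z C hz) as (hs & Hs & hsu & _).
  pose proof (RG_kernel_nonneg C (Rlt_le _ _ hC)).
  split; [nra |]; unfold RG_kernel.
  assert (HrC : C * C <= r C) by (pose proof (rad_sqr x y C hx hy); nra).
  replace (C * (C * C * z / (2 * r C * s C * (s C + C))))
    with (C * C * C * z / (2 * r C * s C * (s C + C)))
    by (field; repeat split; nra).
  apply Rdiv_le_cross; [repeat apply Rmult_lt_0_compat; lra | lra |].
  assert (C * C * C <= r C * s C) by (apply Rmult_le_compat; nra).
  assert (C * C * C * (2 * C) <= r C * s C * (s C + C)) by (apply Rmult_le_compat; nra).
  nra.
Qed.

End Kernel.

(** * The increment of R_G *)

Section Increment.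

Variables x y z : R.
Hypotheses (hx : 0 < x) (hy : 0 < y) (hz : 0 < z).

Local Notation a := ((x + y) / 2).
Local Notation g := (sqrt (x * y)).
Local Notation c := (sqrt (g * ((a + g) / 2))).

Lemma RInt_RG_integrand_sqr_diff C : 0 <= C ->
  RInt (fun u => 2 * u * RG_integrand x y z (u * u)) 0 C
  = RInt (fun u => 2 * u * RG_integrand x y 0 (u * u)) 0 C + RInt (RG_kernel x y z) 0 C
    - C * RG_kernel x y z C.
Proof.
  intros hC; set (Az := fun u => 2 * u * RG_integrand x y z (u * u)).
  pose proof (fun u => continuous_RG_kernel x y z u hx hy hz) as HK.
  pose proof (fun u => continuous_RG0_subst x y u hx hy) as HA0.
  assert (HAz : forall u, continuous Az u) by (intros; apply continuous_RG_integrand_sqr; lra).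
  assert (Hex : forall f : R -> R, (forall u, continuous f u) -> ex_RInt f 0 C)
    by (intros f Hf; apply (ex_RInt_continuous (V := R_CompleteNormedModule)); auto).
  assert (Hparts : is_RInt (fun u => RG_kernel x y z u + RG0_subst x y u - Az u) 0 C
                     (C * RG_kernel x y z C - 0 * RG_kernel x y z 0)).
  { apply (is_RInt_derive (V := R_CompleteNormedModule) (fun u => u * RG_kernel x y z u)).
    - intros u _; apply is_derive_mul_RG_kernel; auto.
    - intros u _.
      apply (continuous_minus (K := R_AbsRing)
               (fun u => RG_kernel x y z u + RG0_subst x y u) Az); auto.
      apply (continuous_plus (K := R_AbsRing) (RG_kernel x y z) (RG0_subst x y)); auto. }
  assert (Hsum : is_RInt (fun u => RG_kernel x y z u + RG0_subst x y u - Az u) 0 C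
                   (RInt (RG_kernel x y z) 0 C + RInt (RG0_subst x y) 0 C - RInt Az 0 C)).
  { apply (is_RInt_minus (V := R_NormedModule)); [apply (is_RInt_plus (V := R_NormedModule)) |];
      apply (RInt_correct (V := R_CompleteNormedModule)), Hex; auto. }
  assert (Hsubst : RInt (fun u => 2 * u * RG_integrand x y 0 (u * u)) 0 C
                   = RInt (RG0_subst x y) 0 C).
  { apply RInt_ext; intros u Hu; apply RG0_subst_eq; auto.
    rewrite Rmin_left in Hu; lra. }
  rewrite Hsubst.
  pose proof (is_RInt_unique _ _ _ _ Hparts); pose proof (is_RInt_unique _ _ _ _ Hsum); lra.
Qed.

Lemma is_lim_mul_RG_kernel : is_lim (fun C => C * RG_kernel x y z C) p_infty 0.
Proof.
  apply (is_lim_le_le_loc (fun _ => 0) (fun C => z / 4 / C)).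
  - exists 0; intros C hC; destruct (mul_RG_kernel_bound x y z hx hy hz C hC).
    split; [lra |]; replace (z / 4 / C) with (z / (4 * C)) by (field; lra); lra.
  - apply is_lim_const.
  - apply is_lim_div_pinfty.
Qed.

Lemma ex_is_lim_RInt_RG0 :
  exists l : R, is_lim (fun C => RInt (fun u => 2 * u * RG_integrand x y 0 (u * u)) 0 C) p_infty l.
Proof.
  apply (is_lim_RInt_of_le_inv_rad x y hx hy _ ((x + y) / 2)); [lra | |].
  - intros u _; apply continuous_RG_integrand_sqr; lra.
  - intros u hu; rewrite RG0_subst_eq by auto; apply RG0_subst_bound; auto.
Qed.

Lemma ex_is_lim_RInt_RG_kernel :
  exists E : R, is_lim (fun C => RInt (RG_kernel x y z) 0 C) p_infty E.
Proof.
  apply (is_lim_RInt_of_le_inv_rad x y hx hy _ (z / 4)); [lra | |].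
  - intros u _; apply continuous_RG_kernel; auto.
  - intros u hu; split; [apply RG_kernel_nonneg | apply Rlt_le, RG_kernel_lt]; auto.
Qed.

Lemma R_G_eq_R_G0_add (E : R) : is_lim (fun C => RInt (RG_kernel x y z) 0 C) p_infty E ->
  R_G x y z = R_G x y 0 + E.
Proof.
  intros HE; destruct ex_is_lim_RInt_RG0 as [L0 HL0].
  rewrite (R_G_of_is_lim x y 0 L0) by (auto; lra).
  apply R_G_of_is_lim; [auto | auto | lra |].
  apply is_lim_ext_loc with
    (fun C => RInt (fun u => 2 * u * RG_integrand x y 0 (u * u)) 0 C + RInt (RG_kernel x y z) 0 C
              - C * RG_kernel x y z C).
  - exists 0; intros C hC; symmetry; apply RInt_RG_integrand_sqr_diff; lra.
  - rewrite <- (Rminus_0_r (L0 + E)).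
    apply is_lim_minus'; [apply is_lim_plus'; auto | apply is_lim_mul_RG_kernel].
Qed.

Lemma RG_kernel_limit_ge (E : R) : is_lim (fun C => RInt (RG_kernel x y z) 0 C) p_infty E ->
  PI * z / 8 * (/ sqrt a - sqrt z / a) <= E.
Proof.
  intros HE.
  assert (hsa : 0 < sqrt a) by (apply sqrt_lt_R0; lra).
  assert (hsz : 0 < sqrt z) by (apply sqrt_lt_R0; lra).
  set (m := fun u => z / 4 * (/ sqrt a * (sqrt a / (u * u + sqrt a * sqrt a))
                              - sqrt z / a * (sqrt z / (u * u + sqrt z * sqrt z)))).
  set (M := fun C => z / 4 * (/ sqrt a * atan (C / sqrt a) - sqrt z / a * atan (C / sqrt z))).
  assert (Hm : forall C, is_RInt m 0 C (M C)).
  { intros C; apply (is_RInt_scal (V := R_NormedModule)), (is_RInt_minus (V := R_NormedModule));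
      apply (is_RInt_scal (V := R_NormedModule)), is_RInt_cauchy; auto. }
  assert (HM : is_lim M p_infty (z / 4 * (/ sqrt a * (PI / 2) - sqrt z / a * (PI / 2)))).
  { apply (is_lim_scal_l _ (z / 4) p_infty (Finite _)), is_lim_minus';
      apply (is_lim_scal_l _ _ p_infty (Finite _)), is_lim_atan_pinfty; auto. }
  assert (Hle : Rbar_le (z / 4 * (/ sqrt a * (PI / 2) - sqrt z / a * (PI / 2))) E).
  { apply (is_lim_le_loc (fun C => RInt m 0 C) (fun C => RInt (RG_kernel x y z) 0 C) p_infty); auto.
    - exists 0; intros C hC; apply RInt_le; [lra | eexists; apply Hm | |].
      + apply (ex_RInt_continuous (V := R_CompleteNormedModule)); intros u _.
        apply continuous_RG_kernel; auto.
      + intros u hu; apply RG_kernel_ge; auto; lra.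
    - apply is_lim_ext with M; auto; intros C; symmetry; apply is_RInt_unique, Hm. }
  simpl in Hle; replace (PI * z / 8 * (/ sqrt a - sqrt z / a))
    with (z / 4 * (/ sqrt a * (PI / 2) - sqrt z / a * (PI / 2))) by (field; lra).
  exact Hle.
Qed.

Lemma RInt_RG_kernel_le_gap :
  exists delta, 0 < delta /\
    forall C, 1 <= C -> RInt (RG_kernel x y z) 0 C <= PI * z / (8 * sqrt c) - delta.
Proof.
  set (d := fun u => z / 4 * / rad x y u - RG_kernel x y z u).
  assert (Hd : forall u, continuous d u).
  { intros u.
    apply (continuous_minus (K := R_AbsRing) (fun v => z / 4 * / rad x y v) (RG_kernel x y z)).
    - apply (continuous_mult (K := R_AbsRing) (fun _ => z / 4) (fun v => / rad x y v));
        [apply continuous_const | apply continuous_inv_rad; auto].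
    - apply continuous_RG_kernel; auto. }
  assert (Hex : forall (f : R -> R) a b, (forall u, continuous f u) -> ex_RInt f a b)
    by (intros; apply (ex_RInt_continuous (V := R_CompleteNormedModule)); auto).
  exists (RInt d 0 1); split.
  - apply RInt_gt_0; [lra | | auto].
    intros u hu; unfold d; pose proof (RG_kernel_lt x y z hx hy hz u); lra.
  - intros C hC.
    assert (HK : RInt (RG_kernel x y z) 0 C = z / 4 * RInt (fun u => / rad x y u) 0 C - RInt d 0 C).
    { rewrite <- (RInt_scal (V := R_CompleteNormedModule)).
      rewrite <- (RInt_minus (V := R_CompleteNormedModule)).
      - apply RInt_ext; intros u _; unfold d, minus, plus, opp, scal; simpl.
        unfold mult; simpl; ring.
      - apply (ex_RInt_scal (V := R_CompleteNormedModule)), Hex.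
        intros; apply continuous_inv_rad; auto.
      - apply Hex, Hd.
      - apply Hex; intros; apply continuous_inv_rad; auto. }
    assert (Htail : 0 <= RInt d 1 C).
    { apply RInt_ge_0; [lra | apply Hex, Hd |].
      intros u hu; unfold d; pose proof (RG_kernel_lt x y z hx hy hz u); lra. }
    rewrite <- (RInt_Chasles d 0 1 C) in HK by (apply Hex, Hd).
    pose proof (RInt_inv_rad_le x y hx hy C ltac:(lra)).
    change (plus (RInt d 0 1) (RInt d 1 C)) with (RInt d 0 1 + RInt d 1 C) in HK.
    replace (PI * z / (8 * sqrt c)) with (z / 4 * (PI / (2 * sqrt c)))
      by (field; apply Rgt_not_eq, sqrt_lt_R0, landen_pos; auto).
    nra.
Qed.

Lemma RG_kernel_limit_lt (E : R) : is_lim (fun C => RInt (RG_kernel x y z) 0 C) p_infty E ->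
  E < PI * z / (8 * sqrt c).
Proof.
  intros HE; destruct RInt_RG_kernel_le_gap as (delta & hdelta & Hgap).
  assert (Hle : Rbar_le E (PI * z / (8 * sqrt c) - delta)).
  { apply (is_lim_le_loc (fun C => RInt (RG_kernel x y z) 0 C)
                          (fun _ => PI * z / (8 * sqrt c) - delta) p_infty); auto.
    - exists 1; intros C hC; apply Hgap; lra.
    - apply is_lim_const. }
  simpl in Hle; lra.
Qed.

Lemma theta_bounds (E : R) : is_lim (fun C => RInt (RG_kernel x y z) 0 C) p_infty E ->
  / sqrt a * (1 - 4 / PI * sqrt (z / a)) < 8 * E / (PI * z) < / sqrt c.
Proof.
  intros HE.
  pose proof (RG_kernel_limit_ge E HE); pose proof (RG_kernel_limit_lt E HE).
  pose proof PI_RGT_0; pose proof PI_lt_4.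
  assert (hsa : 0 < sqrt a) by (apply sqrt_lt_R0; lra).
  assert (hsz : 0 < sqrt z) by (apply sqrt_lt_R0; lra).
  assert (Hsa : sqrt a * sqrt a = a) by (apply sqrt_sqrt; lra).
  rewrite (sqrt_div_alt z ((x + y) / 2)) by lra.
  split.
  - apply Rlt_le_trans with (/ sqrt a - sqrt z / a).
    + replace (/ sqrt a * (1 - 4 / PI * (sqrt z / sqrt a)))
        with (/ sqrt a - 4 / PI * (sqrt z / (sqrt a * sqrt a))) by (field; lra).
      rewrite Hsa.
      assert (1 < 4 / PI) by (apply Rmult_lt_reg_r with PI; [lra | field_simplify; lra]).
      assert (0 < sqrt z / a) by (apply Rdiv_lt_0_compat; lra).
      nra.
    + apply Rmult_le_reg_l with (PI * z / 8); [nra |].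
      replace (PI * z / 8 * (8 * E / (PI * z))) with E by (field; lra); lra.
  - apply Rmult_lt_reg_l with (PI * z / 8); [nra |].
    replace (PI * z / 8 * (8 * E / (PI * z))) with E by (field; lra).
    replace (PI * z / 8 * / sqrt c) with (PI * z / (8 * sqrt c)); [lra |].
    field; apply Rgt_not_eq, sqrt_lt_R0, landen_pos; auto.
Qed.

End Increment.

Theorem mainTheorem17 (x y z : R) (hx : 0 < x) (hy : 0 < y) (hz : 0 < z) :
  let a := (x + y) / 2 in
  let g := sqrt (x * y) in
  (exists theta : R,
     R_G x y z = R_G x y 0 + PI * theta * z / 8 /\
     / sqrt a * (1 - 4 / PI * sqrt (z / a)) < theta /\
     theta < Rpower (2 / (a * g + g ^ 2)) (/ 4)) /\
  Rpower (2 / (a * g + g ^ 2)) (/ 4) <= / sqrt g /\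
  (Rpower (2 / (a * g + g ^ 2)) (/ 4) = / sqrt g <-> x = y).
Proof.
  cbv zeta; rewrite Rpower_landen by auto.
  destruct (ex_is_lim_RInt_RG_kernel x y z hx hy hz) as [E HE].
  split; [| split; [apply inv_sqrt_landen_le | apply inv_sqrt_landen_eq_iff]; auto].
  exists (8 * E / (PI * z)); split; [| apply theta_bounds; auto].
  rewrite (R_G_eq_R_G0_add x y z hx hy hz E HE); field.
  split; [lra | apply Rgt_not_eq, PI_RGT_0].
Qed.
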